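(* If $R\subset\mathbb{R}^2$ is (the open domain bounded by) a rectangle with side lengths $r$ and $s$, then \[ \max\left\{\sqrt2,\ \sqrt{1+\frac{\max\{r,s\}^2}{4\min\{r,s\}^2}}\right\}\le P(R)\le\sqrt{1+\frac{\max\{r,s\}^2}{\min\{r,s\}^2}}. \]
   Context: For four distinct points $a,b,c,d\in\mathbb{R}^2$ set $p(a,b,c,d)=\frac{|a-b||c-d|+|a-d||b-c|}{|a-c||b-d|}$. For a domain $D$ whose boundary is a Jordan curve, $P(D)=\sup p(a,b,c,d)$ over all distinct $a,b,c,d\in\partial D$ occurring in this order when $\partial D$ is traversed in the positive direction. *)

From Stdlib Require Import Reals Lra.
Open Scope R_scope.

Definition pt := (R * R)%type.

Definition dist2 (a b : pt) : R :=
  sqrt ((fst a - fst b)^2 + (snd a - snd b)^2).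

Definition pval (a b c d : pt) : R :=
  (dist2 a b * dist2 c d + dist2 a d * dist2 b c) / (dist2 a c * dist2 b d).

(* Vertices v0, v0+r u, v0+r u+s w, v0+s w, listed counterclockwise. *)
Definition rect_vertex (v0 : pt) (th r s : R) (k : nat) : pt :=
  let u := (cos th, sin th) in
  let w := (- sin th, cos th) in
  match k with
  | 0%nat => v0
  | 1%nat => (fst v0 + r * fst u, snd v0 + r * snd u)
  | 2%nat => (fst v0 + r * fst u + s * fst w, snd v0 + r * snd u + s * snd w)
  | _ => (fst v0 + s * fst w, snd v0 + s * snd w)
  end.

Definition lerp (p q : pt) (t : R) : pt :=
  (fst p + t * (fst q - fst p), snd p + t * (snd q - snd p)).

(* Positively oriented parametrization of the boundary on [0,4):
   the k-th side is traversed for t in [k, k+1). Injective on [0,4). *)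
Definition rect_param (v0 : pt) (th r s : R) (t : R) : pt :=
  let V := rect_vertex v0 th r s in
  if Rlt_dec t 1 then lerp (V 0%nat) (V 1%nat) t
  else if Rlt_dec t 2 then lerp (V 1%nat) (V 2%nat) (t - 1)
  else if Rlt_dec t 3 then lerp (V 2%nat) (V 3%nat) (t - 2)
  else lerp (V 3%nat) (V 0%nat) (t - 3).

(* a, b, c, d lie on the boundary and occur in this (cyclic) order when the
   boundary is traversed in the positive direction. *)
Definition in_order_on_rect (v0 : pt) (th r s : R) (a b c d : pt) : Prop :=
  exists ta tb tc td : R,
    0 <= ta < 4 /\ 0 <= tb < 4 /\ 0 <= tc < 4 /\ 0 <= td < 4 /\
    rect_param v0 th r s ta = a /\ rect_param v0 th r s tb = b /\
    rect_param v0 th r s tc = c /\ rect_param v0 th r s td = d /\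
    ((ta < tb < tc /\ tc < td) \/ (tb < tc < td /\ td < ta) \/
     (tc < td < ta /\ ta < tb) \/ (td < ta < tb /\ tb < tc)).

(* The set of values p(a,b,c,d) whose supremum is P(R). *)
Definition Pset (v0 : pt) (th r s : R) (x : R) : Prop :=
  exists a b c d : pt,
    a <> b /\ a <> c /\ a <> d /\ b <> c /\ b <> d /\ c <> d /\
    in_order_on_rect v0 th r s a b c d /\ x = pval a b c d.

(* On the boundary of a rectangle with sides M >= m, let a, b, c, d be in positive cyclic
   order and let alpha, beta, gamma, delta be the angles of the convex quadrilateral abcd.
   The complex form of Ptolemy's theorem gives
     |ac|^2 |bd|^2 = A + B - 2 sqrt(A B) cos(alpha + gamma),
   with A = |ab|^2 |cd|^2 and B = |ad|^2 |bc|^2.  A case analysis on the sides carrying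
   the four points shows that two opposite angles are either not both acute or sum to at
   least 2 phi, where tan phi = m / M.  Since alpha + beta + gamma + delta = 2 pi, this
   forces cos(alpha + gamma) <= cos(2 phi) = (M^2 - m^2) / (M^2 + m^2), and then
   (|ab||cd| + |ad||bc|)^2 <= 2 (A + B) <= (1 + M^2/m^2) |ac|^2 |bd|^2.
   The lower bounds come from explicit quadruples: the midpoints of two opposite sides
   together with two corners give sqrt(1 + M^2/(4 m^2)), and the two points at distance e
   from a corner together with that corner and the opposite corner give a value tending
   to sqrt 2 as e -> 0. *)

From Stdlib Require Import Reals Lra Psatz.
Open Scope R_scope.

Definition sqdist (p q : pt) : R := (fst p - fst q)^2 + (snd p - snd q)^2.

Lemma sqdist_comm p q : sqdist p q = sqdist q p.
Proof. unfold sqdist; ring. Qed.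

Lemma sqdist_nonneg p q : 0 <= sqdist p q.
Proof.
  unfold sqdist; pose proof (pow2_ge_0 (fst p - fst q)); pose proof (pow2_ge_0 (snd p - snd q)).
  lra.
Qed.

(* (corner_dot p v n, corner_cross p v n) is the complex number (p - v) * conj (n - v); when
   p, v, n are consecutive vertices of a positively oriented polygon its argument is the
   interior angle at v. *)
Definition corner_dot (p v n : pt) : R :=
  (fst p - fst v) * (fst n - fst v) + (snd p - snd v) * (snd n - snd v).
Definition corner_cross (p v n : pt) : R :=
  (fst n - fst v) * (snd p - snd v) - (snd n - snd v) * (fst p - fst v).

(* For angles given by x1 + i y1 and x2 + i y2 (with y1, y2 >= 0): one of them is at least
   pi/2, or their sum is at least 2 phi, where tan phi = m / M. *)
Definition angle_sum_large (M m x1 y1 x2 y2 : R) : Prop :=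
  x1 <= 0 \/ x2 <= 0 \/
  2 * M * m * (x1 * x2 - y1 * y2) <= (M^2 - m^2) * (x1 * y2 + x2 * y1).

Lemma angle_sum_large_sym M m x1 y1 x2 y2 :
  angle_sum_large M m x1 y1 x2 y2 -> angle_sum_large M m x2 y2 x1 y1.
Proof.
  unfold angle_sum_large; intros [H|[H|H]]; [right; left | left | right; right]; nra.
Qed.

Lemma angle_sum_large_of_cones M m p q x1 y1 x2 y2 :
  0 < m -> m <= M -> 0 < p -> 0 < q -> p * m <= q * M ->
  q * x1 <= p * y1 -> q * x2 <= p * y2 ->
  angle_sum_large M m x1 y1 x2 y2.
Proof.
  intros Hm HmM Hp Hq Hpq H1 H2; unfold angle_sum_large.
  destruct (Rle_dec x1 0) as [|Hx1]; [now left|].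
  destruct (Rle_dec x2 0) as [|Hx2]; [right; now left|]; right; right.
  assert (E1 : m * x1 <= M * y1) by nra.
  assert (E2 : m * x2 <= M * y2) by nra.
  assert (Id : M * ((M^2 - m^2) * (x1 * y2 + x2 * y1) - 2 * M * m * (x1 * x2 - y1 * y2)) =
    (M^2 + m^2) * (x1 * (M * y2 - m * x2) + x2 * (M * y1 - m * x1))
    + 2 * m * ((M * y1 - m * x1) * (M * y2 - m * x2))) by ring.
  assert (0 <= (M^2 + m^2) * (x1 * (M * y2 - m * x2) + x2 * (M * y1 - m * x1))
    + 2 * m * ((M * y1 - m * x1) * (M * y2 - m * x2))).
  { apply Rplus_le_le_0_compat; apply Rmult_le_pos; nra. }
  nra.
Qed.

Lemma angle_sum_large_bound M m x1 y1 x2 y2 :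
  0 < m -> m <= M -> 0 <= y1 -> 0 <= y2 -> (0 < x1 \/ 0 < y1) ->
  0 < x1 * x2 - y1 * y2 -> 0 <= x1 * y2 + y1 * x2 ->
  angle_sum_large M m x1 y1 x2 y2 ->
  2 * M * m * (x1 * x2 - y1 * y2) <= (M^2 - m^2) * (x1 * y2 + y1 * x2).
Proof.
  intros Hm HmM Hy1 Hy2 Hnz HW1 HW2 [Hx|[Hx|Hx]]; [exfalso| exfalso | lra].
  - assert (x1 * x2 > 0) by nra.
    assert (x1 < 0) by (destruct (Rtotal_order x1 0) as [|[|]]; subst; nra).
    assert (x2 < 0) by nra.
    assert (y1 = 0) by nra. destruct Hnz; lra.
  - assert (x1 * x2 > 0) by nra.
    assert (x2 < 0) by (destruct (Rtotal_order x2 0) as [|[|]]; subst; nra).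
    assert (x1 < 0) by nra.
    assert (y1 = 0) by nra. destruct Hnz; lra.
Qed.

Lemma opposite_angle_sums_bound M m xa ya xb yb xc yc xd yd L :
  0 < m -> m <= M -> 0 <= ya -> 0 <= yb -> 0 <= yc -> 0 <= yd -> 0 < L ->
  (xa * xc - ya * yc) * (xb * xd - yb * yd) - (xa * yc + ya * xc) * (xb * yd + yb * xd) = L ->
  (xa * xc - ya * yc) * (xb * yd + yb * xd) + (xa * yc + ya * xc) * (xb * xd - yb * yd) = 0 ->
  (0 < xa \/ 0 < ya) ->
  angle_sum_large M m xa ya xc yc -> angle_sum_large M m xb yb xd yd ->
  xa * xc - ya * yc <= 0 \/
  4 * M^2 * m^2 * (xa * xc - ya * yc)^2 <= (M^2 - m^2)^2 * (xa * yc + ya * xc)^2.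
Proof.
  (* Hre and Him say (W1 + i W2) (V1 + i V2) = L > 0: the four angles sum to 2 pi. *)
  intros Hm HmM Hya Hyb Hyc Hyd HL Hre Him Ha Hac Hbd.
  set (W1 := xa * xc - ya * yc) in *; set (W2 := xa * yc + ya * xc) in *.
  set (V1 := xb * xd - yb * yd) in *; set (V2 := xb * yd + yb * xd) in *.
  destruct (Rle_dec W1 0) as [|HW1]; [now left|right]; apply Rnot_le_lt in HW1.
  assert (HMm : 0 <= 2 * M * m * W1) by (apply Rmult_le_pos; nra).
  destruct (Rle_dec 0 W2) as [HW2|HW2].
  - assert (2 * M * m * W1 <= (M^2 - m^2) * W2)
      by (apply angle_sum_large_bound; unfold W1, W2 in *; try assumption; lra).
    nra.
  - (* (V1, V2) is a positive multiple of the conjugate of (W1, W2) *)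
    assert (EV1 : V1 * (W1^2 + W2^2) = L * W1) by nra.
    assert (EV2 : V2 * (W1^2 + W2^2) = - L * W2) by nra.
    assert (HV1 : 0 < V1) by nra.
    assert (HV2 : 0 < V2) by nra.
    assert (Hb : 0 < xb \/ 0 < yb).
    { destruct (Rlt_dec 0 yb); [now right|left].
      assert (yb = 0) by lra. subst V1 V2; nra. }
    assert (2 * M * m * V1 <= (M^2 - m^2) * V2)
      by (apply angle_sum_large_bound; unfold V1, V2 in *; try assumption; lra).
    assert (L * (2 * M * m * W1 - (M^2 - m^2) * (- W2)) <= 0).
    { replace (L * (2 * M * m * W1 - (M^2 - m^2) * (- W2)))
        with (2 * M * m * (V1 * (W1^2 + W2^2)) - (M^2 - m^2) * (V2 * (W1^2 + W2^2)))
        by (rewrite EV1, EV2; ring).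
      assert (0 <= W1^2 + W2^2) by nra. nra. }
    assert (2 * M * m * W1 <= (M^2 - m^2) * (- W2)) by nra.
    nra.
Qed.

Lemma cos_sum_bound M m A B W1 W2 :
  0 < m -> m <= M -> 0 <= A -> 0 <= B -> A * B = W1^2 + W2^2 ->
  (W1 <= 0 \/ 4 * M^2 * m^2 * W1^2 <= (M^2 - m^2)^2 * W2^2) ->
  2 * (M^2 + m^2) * W1 <= (M^2 - m^2) * (A + B).
Proof.
  intros Hm HmM HA HB HAB HW.
  assert (Hd : 0 <= M^2 - m^2) by nra.
  assert (HAB0 : 0 <= (M^2 - m^2) * (A + B)) by (apply Rmult_le_pos; lra).
  destruct (Rle_dec W1 0) as [|HW1].
  { assert (0 <= 2 * (M^2 + m^2) * (- W1)) by (apply Rmult_le_pos; nra). lra. }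
  destruct HW as [|HW]; [lra|].
  (* AM-GM: (A + B)^2 >= 4 A B = 4 (W1^2 + W2^2) *)
  assert (HAM : 4 * (W1^2 + W2^2) <= (A + B)^2).
  { rewrite <- HAB. pose proof (pow2_ge_0 (A - B)). nra. }
  assert (Hsq : (2 * (M^2 + m^2) * W1)^2 <= ((M^2 - m^2) * (A + B))^2).
  { replace ((2 * (M^2 + m^2) * W1)^2)
      with (4 * (M^2 - m^2)^2 * W1^2 + 4 * (4 * M^2 * m^2 * W1^2)) by ring.
    replace (((M^2 - m^2) * (A + B))^2) with ((M^2 - m^2)^2 * (A + B)^2) by ring.
    assert (0 <= (M^2 - m^2)^2) by nra.
    assert ((M^2 - m^2)^2 * (4 * (W1^2 + W2^2)) <= (M^2 - m^2)^2 * (A + B)^2)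
      by (apply Rmult_le_compat_l; lra).
    lra. }
  assert (0 <= 2 * (M^2 + m^2) * W1) by (apply Rmult_le_pos; nra).
  nra.
Qed.

Section Quadrilateral.

Variables a b c d : pt.

Let xa := corner_dot d a b.
Let ya := corner_cross d a b.
Let xb := corner_dot a b c.
Let yb := corner_cross a b c.
Let xc := corner_dot b c d.
Let yc := corner_cross b c d.
Let xd := corner_dot c d a.
Let yd := corner_cross c d a.

Lemma ptolemy_identity :
  sqdist a c * sqdist b d =
  sqdist a b * sqdist c d + sqdist a d * sqdist b c - 2 * (xa * xc - ya * yc).
Proof. unfold sqdist, xa, ya, xc, yc, corner_dot, corner_cross; ring. Qed.

Lemma opposite_sides_identity :
  (sqdist a b * sqdist c d) * (sqdist a d * sqdist b c) =
  (xa * xc - ya * yc)^2 + (xa * yc + ya * xc)^2.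
Proof. unfold sqdist, xa, ya, xc, yc, corner_dot, corner_cross; ring. Qed.

Lemma corner_product_re :
  (xa * xc - ya * yc) * (xb * xd - yb * yd) - (xa * yc + ya * xc) * (xb * yd + yb * xd) =
  sqdist a b * sqdist b c * sqdist c d * sqdist d a.
Proof. unfold sqdist, xa, ya, xb, yb, xc, yc, xd, yd, corner_dot, corner_cross; ring. Qed.

Lemma corner_product_im :
  (xa * xc - ya * yc) * (xb * yd + yb * xd) + (xa * yc + ya * xc) * (xb * xd - yb * yd) = 0.
Proof. unfold xa, ya, xb, yb, xc, yc, xd, yd, corner_dot, corner_cross; ring. Qed.

Lemma quadrilateral_bound M m :
  0 < m -> m <= M -> 0 <= ya -> 0 <= yb -> 0 <= yc -> 0 <= yd ->
  0 < sqdist a b -> 0 < sqdist b c -> 0 < sqdist c d -> 0 < sqdist d a ->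
  (0 < xa \/ 0 < ya) ->
  angle_sum_large M m xa ya xc yc -> angle_sum_large M m xb yb xd yd ->
  2 * m^2 * (sqdist a b * sqdist c d + sqdist a d * sqdist b c)
    <= (M^2 + m^2) * (sqdist a c * sqdist b d).
Proof.
  intros Hm HmM Hya Hyb Hyc Hyd Hab Hbc Hcd Hda Ha Hac Hbd.
  assert (Hsum : 2 * (M^2 + m^2) * (xa * xc - ya * yc)
                 <= (M^2 - m^2) * (sqdist a b * sqdist c d + sqdist a d * sqdist b c)).
  { pose proof (sqdist_comm a d).
    apply (cos_sum_bound M m _ _ _ (xa * yc + ya * xc)); try nra.
    - apply opposite_sides_identity.
    - apply (opposite_angle_sums_bound M m xa ya xb yb xc yc xd yd
               (sqdist a b * sqdist b c * sqdist c d * sqdist d a)); auto.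
      + repeat apply Rmult_lt_0_compat; assumption.
      + apply corner_product_re.
      + apply corner_product_im. }
  rewrite ptolemy_identity. nra.
Qed.

End Quadrilateral.

Lemma sum_div_le_sqrt x y z K :
  0 <= x -> 0 <= y -> 0 < z -> 2 * (x^2 + y^2) <= K * z^2 -> (x + y) / z <= sqrt K.
Proof.
  intros Hx Hy Hz H.
  assert (Hxy : (x + y)^2 <= K * z^2) by (pose proof (pow2_ge_0 (x - y));
    replace ((x + y)^2) with (2 * (x^2 + y^2) - (x - y)^2) by ring; lra).
  assert (HK : 0 <= K).
  { destruct (Rle_dec 0 K) as [|HK]; [assumption|].
    assert (K * z^2 < 0) by (apply Rmult_neg_pos; nra). nra. }
  apply (Rmult_le_reg_r z); [assumption|].
  unfold Rdiv; rewrite Rmult_assoc, Rinv_l, Rmult_1_r by lra.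
  rewrite <- (sqrt_pow2 z) by lra.
  rewrite <- sqrt_mult by (try apply pow2_ge_0; lra).
  rewrite <- (sqrt_pow2 (x + y)) by lra.
  apply sqrt_le_1; nra.
Qed.

Lemma pval_le_of_quadrilateral_bound M m a b c d :
  0 < m -> 0 < sqdist a c -> 0 < sqdist b d ->
  2 * m^2 * (sqdist a b * sqdist c d + sqdist a d * sqdist b c)
    <= (M^2 + m^2) * (sqdist a c * sqdist b d) ->
  pval a b c d <= sqrt (1 + M^2 / m^2).
Proof.
  intros Hm Hac Hbd H.
  unfold pval, dist2; fold (sqdist a b) (sqdist c d) (sqdist a d) (sqdist b c)
    (sqdist a c) (sqdist b d).
  apply sum_div_le_sqrt; try (apply Rmult_le_pos; apply sqrt_pos).
  - apply Rmult_lt_0_compat; apply sqrt_lt_R0; assumption.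
  - rewrite !Rpow_mult_distr, !pow2_sqrt by apply sqdist_nonneg.
    apply (Rmult_le_reg_l (m^2)); [nra|].
    replace (m^2 * ((1 + M^2 / m^2) * (sqdist a c * sqdist b d)))
      with ((M^2 + m^2) * (sqdist a c * sqdist b d)) by (field; lra).
    lra.
Qed.

Definition usq_x (t : R) : R :=
  if Rlt_dec t 1 then t else if Rlt_dec t 2 then 1 else if Rlt_dec t 3 then 3 - t else 0.
Definition usq_y (t : R) : R :=
  if Rlt_dec t 1 then 0 else if Rlt_dec t 2 then t - 1 else if Rlt_dec t 3 then 1 else 4 - t.

Definition usq_dot_x (p v n : R) : R := (usq_x p - usq_x v) * (usq_x n - usq_x v).
Definition usq_dot_y (p v n : R) : R := (usq_y p - usq_y v) * (usq_y n - usq_y v).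
Definition usq_cross (p v n : R) : R :=
  (usq_x n - usq_x v) * (usq_y p - usq_y v) - (usq_y n - usq_y v) * (usq_x p - usq_x v).

Ltac usq_cases :=
  unfold usq_dot_x, usq_dot_y, usq_cross, usq_x, usq_y;
  repeat match goal with |- context [Rlt_dec ?t ?c] => destruct (Rlt_dec t c) end.

Ltac nonneg_product a b := assert (0 <= a * b) by (apply Rmult_le_pos; lra).

Lemma usq_sqdist_pos t1 t2 : 0 <= t1 -> t1 < t2 -> t2 < 4 ->
  0 < (usq_x t1 - usq_x t2)^2 + (usq_y t1 - usq_y t2)^2.
Proof. intros; usq_cases; try lra; nra. Qed.

Lemma usq_cross_nonneg p v n : 0 <= p < 4 -> 0 <= v < 4 -> 0 <= n < 4 ->
  (v < n < p \/ p < v < n \/ n < p < v) -> 0 <= usq_cross p v n.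
Proof. intros; usq_cases; try lra; nra. Qed.

Lemma usq_corner_lt_pi ta tb td : 0 <= ta -> ta < tb -> tb < td -> td < 4 ->
  0 < usq_cross td ta tb \/
  (0 <= usq_dot_x td ta tb /\ 0 <= usq_dot_y td ta tb /\
   0 < usq_dot_x td ta tb + usq_dot_y td ta tb).
Proof. intros; usq_cases; try lra; first [left; nra | right; repeat split; nra]. Qed.

Lemma usq_dots_nonpos_adjacent t1 tv t2 : 0 <= t1 -> t1 < tv -> tv < t2 -> t2 < 4 ->
  (t2 < 2 \/ (1 <= t1 /\ t2 < 3) \/ 2 <= t1) ->
  usq_dot_x t1 tv t2 <= 0 /\ usq_dot_y t1 tv t2 <= 0.
Proof. intros; usq_cases; try lra; split; nra. Qed.

Lemma usq_dots_nonpos_around_origin t1 tw t2 :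
  0 <= t1 < 1 -> 3 <= t2 < 4 -> 0 <= tw < 4 -> (tw < t1 \/ t2 < tw) ->
  usq_dot_x t2 tw t1 <= 0 /\ usq_dot_y t2 tw t1 <= 0.
Proof. intros; usq_cases; try lra; split; nra. Qed.

(* Seen from a third boundary point, points on the opposite sides 0 and 2 span an angle
   whose tangent is at least s / r once the square is stretched to the r x s rectangle
   (see [rect_cone_rs]); likewise r / s for the sides 1 and 3. *)
Lemma usq_cone_02_inside t1 tv t2 : 0 <= t1 < 1 -> 2 <= t2 < 3 -> t1 < tv < t2 ->
  usq_dot_y t1 tv t2 <= 0 /\ usq_dot_x t1 tv t2 <= usq_cross t1 tv t2.
Proof.
  intros; usq_cases; try lra; split; try nra.
  all: nonneg_product (2 - tv) (1 - t1); nonneg_product (tv - 1) (t2 - 2);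
    nonneg_product (2 - tv) (t2 - 2); nonneg_product (tv - 1) (1 - t1); nra.
Qed.

Lemma usq_cone_02_outside t1 tw t2 : 0 <= t1 < 1 -> 2 <= t2 < 3 -> 0 <= tw < 4 ->
  (tw < t1 \/ t2 < tw) ->
  usq_dot_y t2 tw t1 <= 0 /\ usq_dot_x t2 tw t1 <= usq_cross t2 tw t1.
Proof.
  intros; usq_cases; try lra; split; try nra.
  all: nonneg_product (4 - tw) (3 - t2); nonneg_product (tw - 3) t1;
    nonneg_product (4 - tw) t1; nonneg_product (tw - 3) (3 - t2); nra.
Qed.

Lemma usq_cone_13_inside t1 tv t2 : 1 <= t1 < 2 -> 3 <= t2 < 4 -> t1 < tv < t2 ->
  usq_dot_x t1 tv t2 <= 0 /\ usq_dot_y t1 tv t2 <= usq_cross t1 tv t2.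
Proof.
  intros; usq_cases; try lra; split; try nra.
  all: nonneg_product (3 - tv) (2 - t1); nonneg_product (tv - 2) (t2 - 3);
    nonneg_product (3 - tv) (t1 - 1); nonneg_product (tv - 2) (4 - t2);
    nonneg_product (3 - tv) (t2 - 3); nonneg_product (tv - 2) (2 - t1);
    nonneg_product (3 - tv) (4 - t2); nonneg_product (tv - 2) (t1 - 1); nra.
Qed.

Lemma usq_cone_13_outside t1 tw t2 : 1 <= t1 < 2 -> 3 <= t2 < 4 -> 0 <= tw < 4 ->
  (tw < t1 \/ t2 < tw) ->
  usq_dot_x t2 tw t1 <= 0 /\ usq_dot_y t2 tw t1 <= usq_cross t2 tw t1.
Proof.
  intros; usq_cases; try lra; split; try nra.
  all: nonneg_product (1 - tw) (4 - t2); nonneg_product tw (t1 - 1);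
    nonneg_product (1 - tw) (t1 - 1); nonneg_product tw (4 - t2);
    nonneg_product (1 - tw) (t2 - 3); nonneg_product tw (2 - t1);
    nonneg_product (1 - tw) (2 - t1); nonneg_product tw (t2 - 3); nra.
Qed.

Lemma weighted_sum_pos a b u w :
  0 < a -> 0 < b -> 0 <= u -> 0 <= w -> 0 < u + w -> 0 < a * u + b * w.
Proof.
  intros Ha Hb Hu Hw Huw.
  destruct (Rlt_dec 0 u).
  - assert (0 < a * u) by (apply Rmult_lt_0_compat; lra).
    assert (0 <= b * w) by (apply Rmult_le_pos; lra). lra.
  - assert (0 < b * w) by (apply Rmult_lt_0_compat; lra).
    assert (0 <= a * u) by (apply Rmult_le_pos; lra). lra.
Qed.

Definition rect_point (r s t : R) : pt := (r * usq_x t, s * usq_y t).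

Section Rectangle.

Variables r s : R.
Hypothesis Hr : 0 < r.
Hypothesis Hs : 0 < s.

Let P := rect_point r s.

Lemma corner_dot_rect p v n :
  corner_dot (P p) (P v) (P n) = r^2 * usq_dot_x p v n + s^2 * usq_dot_y p v n.
Proof. unfold P, rect_point, corner_dot, usq_dot_x, usq_dot_y; simpl; ring. Qed.

Lemma corner_cross_rect p v n : corner_cross (P p) (P v) (P n) = r * s * usq_cross p v n.
Proof. unfold P, rect_point, corner_cross, usq_cross; simpl; ring. Qed.

Lemma sqdist_rect_pos t1 t2 : 0 <= t1 -> t1 < t2 -> t2 < 4 -> 0 < sqdist (P t1) (P t2).
Proof.
  intros H1 H12 H2.
  pose proof (usq_sqdist_pos t1 t2 H1 H12 H2) as Hu.
  assert (E : sqdist (P t1) (P t2) =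
    r^2 * (usq_x t1 - usq_x t2)^2 + s^2 * (usq_y t1 - usq_y t2)^2)
    by (unfold P, rect_point, sqdist; simpl; ring).
  rewrite E; apply weighted_sum_pos; try apply pow2_ge_0; assumption || nra.
Qed.

Lemma corner_cross_rect_nonneg p v n : 0 <= p < 4 -> 0 <= v < 4 -> 0 <= n < 4 ->
  (v < n < p \/ p < v < n \/ n < p < v) -> 0 <= corner_cross (P p) (P v) (P n).
Proof.
  intros; rewrite corner_cross_rect.
  apply Rmult_le_pos; [nra | apply usq_cross_nonneg; assumption].
Qed.

Lemma rect_corner_lt_pi ta tb td : 0 <= ta -> ta < tb -> tb < td -> td < 4 ->
  0 < corner_dot (P td) (P ta) (P tb) \/ 0 < corner_cross (P td) (P ta) (P tb).
Proof.
  intros; rewrite corner_dot_rect, corner_cross_rect.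
  destruct (usq_corner_lt_pi ta tb td) as [Hc | [Hx [Hy Hxy]]]; try assumption.
  - right; apply Rmult_lt_0_compat; nra.
  - left; apply weighted_sum_pos; assumption || nra.
Qed.

Lemma rect_cone_rs p v n :
  usq_dot_y p v n <= 0 -> usq_dot_x p v n <= usq_cross p v n ->
  s * corner_dot (P p) (P v) (P n) <= r * corner_cross (P p) (P v) (P n).
Proof.
  intros Hy Hx; rewrite corner_dot_rect, corner_cross_rect.
  assert (0 <= r^2 * s * (usq_cross p v n - usq_dot_x p v n)) by (apply Rmult_le_pos; nra).
  assert (0 <= s^2 * s * (- usq_dot_y p v n)) by (apply Rmult_le_pos; nra).
  nra.
Qed.

Lemma rect_cone_sr p v n :
  usq_dot_x p v n <= 0 -> usq_dot_y p v n <= usq_cross p v n ->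
  r * corner_dot (P p) (P v) (P n) <= s * corner_cross (P p) (P v) (P n).
Proof.
  intros Hx Hy; rewrite corner_dot_rect, corner_cross_rect.
  assert (0 <= s^2 * r * (usq_cross p v n - usq_dot_y p v n)) by (apply Rmult_le_pos; nra).
  assert (0 <= r^2 * r * (- usq_dot_x p v n)) by (apply Rmult_le_pos; nra).
  nra.
Qed.

Lemma rect_corner_dot_nonpos p v n : usq_dot_x p v n <= 0 -> usq_dot_y p v n <= 0 ->
  corner_dot (P p) (P v) (P n) <= 0.
Proof.
  intros Hx Hy; rewrite corner_dot_rect.
  assert (0 <= r^2 * (- usq_dot_x p v n)) by (apply Rmult_le_pos; nra).
  assert (0 <= s^2 * (- usq_dot_y p v n)) by (apply Rmult_le_pos; nra).
  lra.
Qed.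

Section Ratio.

Variables M m : R.
Hypothesis Hm : 0 < m.
Hypothesis HmM : m <= M.
Hypothesis Hrm : r * m <= s * M.
Hypothesis Hsm : s * m <= r * M.

Lemma rect_angle_sum_large t1 tv t2 tw :
  0 <= t1 -> t1 < tv -> tv < t2 -> t2 < 4 -> 0 <= tw < 4 -> (tw < t1 \/ t2 < tw) ->
  angle_sum_large M m
    (corner_dot (P t2) (P tw) (P t1)) (corner_cross (P t2) (P tw) (P t1))
    (corner_dot (P t1) (P tv) (P t2)) (corner_cross (P t1) (P tv) (P t2)).
Proof.
  intros H1 H1v Hv2 H2 Hw Hwout.
  (* If t1 and t2 lie on the same or on adjacent sides, one of the two angles is at least
     pi/2; if they lie on opposite sides, both angles lie in the cones above. *)
  assert (Between : (t2 < 2 \/ (1 <= t1 /\ t2 < 3) \/ 2 <= t1) ->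
    angle_sum_large M m
      (corner_dot (P t2) (P tw) (P t1)) (corner_cross (P t2) (P tw) (P t1))
      (corner_dot (P t1) (P tv) (P t2)) (corner_cross (P t1) (P tv) (P t2))).
  { intro Hpos; right; left.
    destruct (usq_dots_nonpos_adjacent t1 tv t2); try assumption.
    apply rect_corner_dot_nonpos; assumption. }
  destruct (Rlt_dec t1 1); [destruct (Rlt_dec t2 2); [|destruct (Rlt_dec t2 3)] |
    destruct (Rlt_dec t1 2); [destruct (Rlt_dec t2 3)|]];
    try (apply Between; lra).
  - apply (angle_sum_large_of_cones M m r s); try assumption; apply rect_cone_rs.
    1, 2: apply usq_cone_02_outside; lra.
    all: apply usq_cone_02_inside; lra.
  - left. apply rect_corner_dot_nonpos; apply usq_dots_nonpos_around_origin; lra.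
  - apply (angle_sum_large_of_cones M m s r); try assumption; apply rect_cone_sr.
    1, 2: apply usq_cone_13_outside; lra.
    all: apply usq_cone_13_inside; lra.
Qed.

Lemma rect_quadrilateral_bound ta tb tc td :
  0 <= ta -> ta < tb -> tb < tc -> tc < td -> td < 4 ->
  2 * m^2 * (sqdist (P ta) (P tb) * sqdist (P tc) (P td)
             + sqdist (P ta) (P td) * sqdist (P tb) (P tc))
    <= (M^2 + m^2) * (sqdist (P ta) (P tc) * sqdist (P tb) (P td)).
Proof.
  intros Ha Hab Hbc Hcd Hd.
  apply quadrilateral_bound; try assumption.
  1-4: apply corner_cross_rect_nonneg; lra.
  1-3: apply sqdist_rect_pos; lra.
  - rewrite sqdist_comm; apply sqdist_rect_pos; lra.
  - apply rect_corner_lt_pi; lra.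
  - apply rect_angle_sum_large; lra.
  - apply angle_sum_large_sym, rect_angle_sum_large; lra.
Qed.

End Ratio.

End Rectangle.

Definition rigid (v0 : pt) (th : R) (p : pt) : pt :=
  (fst v0 + fst p * cos th - snd p * sin th, snd v0 + fst p * sin th + snd p * cos th).

Lemma rect_param_rigid v0 th r s t :
  rect_param v0 th r s t = rigid v0 th (rect_point r s t).
Proof.
  unfold rect_param, lerp, rect_vertex, rigid, rect_point, usq_x, usq_y; simpl.
  destruct (Rlt_dec t 1); [|destruct (Rlt_dec t 2); [|destruct (Rlt_dec t 3)]];
    simpl; f_equal; ring.
Qed.

Lemma sqdist_rigid v0 th p q : sqdist (rigid v0 th p) (rigid v0 th q) = sqdist p q.
Proof.
  unfold sqdist, rigid; simpl.
  pose proof (sin2_cos2 th) as E; unfold Rsqr in E.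
  transitivity (((fst p - fst q)^2 + (snd p - snd q)^2) * (sin th * sin th + cos th * cos th));
    [ring | rewrite E; ring].
Qed.

Lemma dist2_sqdist p q : dist2 p q = sqrt (sqdist p q).
Proof. reflexivity. Qed.

Lemma pval_rigid v0 th a b c d :
  pval (rigid v0 th a) (rigid v0 th b) (rigid v0 th c) (rigid v0 th d) = pval a b c d.
Proof. unfold pval; rewrite !dist2_sqdist, !sqdist_rigid; reflexivity. Qed.

Lemma pval_rotate a b c d : pval b c d a = pval a b c d.
Proof.
  unfold pval; rewrite !dist2_sqdist, (sqdist_comm b a), (sqdist_comm c a), (sqdist_comm d a).
  f_equal; ring.
Qed.

Lemma Rmin_Rmax_ratio r s : 0 < r -> 0 < s ->
  0 < Rmin r s /\ Rmin r s <= Rmax r s /\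
  r * Rmin r s <= s * Rmax r s /\ s * Rmin r s <= r * Rmax r s.
Proof. intros; unfold Rmin, Rmax; destruct (Rle_dec r s); nra. Qed.

Lemma pval_rect_sorted_le r s ta tb tc td : 0 < r -> 0 < s ->
  0 <= ta -> ta < tb -> tb < tc -> tc < td -> td < 4 ->
  pval (rect_point r s ta) (rect_point r s tb) (rect_point r s tc) (rect_point r s td)
    <= sqrt (1 + (Rmax r s)^2 / (Rmin r s)^2).
Proof.
  intros Hr Hs Ha Hab Hbc Hcd Hd.
  destruct (Rmin_Rmax_ratio r s Hr Hs) as (Hm & HmM & Hrm & Hsm).
  apply pval_le_of_quadrilateral_bound; try (apply sqdist_rect_pos; lra); try assumption.
  apply rect_quadrilateral_bound; assumption.
Qed.

Lemma Pset_le v0 th r s x : 0 < r -> 0 < s -> Pset v0 th r s x ->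
  x <= sqrt (1 + (Rmax r s)^2 / (Rmin r s)^2).
Proof.
  intros Hr Hs (a & b & c & d & _ & _ & _ & _ & _ & _ & Hord & ->).
  destruct Hord as (ta & tb & tc & td & Ha & Hb & Hc & Hd & <- & <- & <- & <- & Ho).
  rewrite !rect_param_rigid, pval_rigid.
  destruct Ho as [O|[O|[O|O]]].
  - apply pval_rect_sorted_le; lra.
  - rewrite <- pval_rotate; apply pval_rect_sorted_le; lra.
  - rewrite <- pval_rotate, <- pval_rotate; apply pval_rect_sorted_le; lra.
  - rewrite pval_rotate; apply pval_rect_sorted_le; lra.
Qed.

Lemma rect_param_inj v0 th r s t1 t2 : 0 < r -> 0 < s ->
  0 <= t1 < 4 -> 0 <= t2 < 4 -> t1 <> t2 -> rect_param v0 th r s t1 <> rect_param v0 th r s t2.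
Proof.
  intros Hr Hs H1 H2 H12 E.
  assert (Hz : sqdist (rect_point r s t1) (rect_point r s t2) = 0).
  { rewrite <- sqdist_rigid with (v0 := v0) (th := th), <- !rect_param_rigid, E.
    unfold sqdist; ring. }
  destruct (Rlt_dec t1 t2).
  - pose proof (sqdist_rect_pos r s Hr Hs t1 t2); lra.
  - rewrite sqdist_comm in Hz; pose proof (sqdist_rect_pos r s Hr Hs t2 t1); lra.
Qed.

Lemma Pset_rect_points v0 th r s ta tb tc td : 0 < r -> 0 < s ->
  0 <= ta < 4 -> 0 <= tb < 4 -> 0 <= tc < 4 -> 0 <= td < 4 ->
  ((ta < tb < tc /\ tc < td) \/ (tb < tc < td /\ td < ta) \/
   (tc < td < ta /\ ta < tb) \/ (td < ta < tb /\ tb < tc)) ->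
  Pset v0 th r s
    (pval (rect_point r s ta) (rect_point r s tb) (rect_point r s tc) (rect_point r s td)).
Proof.
  intros Hr Hs Ha Hb Hc Hd Ho.
  rewrite <- (pval_rigid v0 th), <- !rect_param_rigid.
  exists (rect_param v0 th r s ta), (rect_param v0 th r s tb),
         (rect_param v0 th r s tc), (rect_param v0 th r s td).
  repeat split; try (apply rect_param_inj; auto; lra).
  exists ta, tb, tc, td; repeat split; auto; lra.
Qed.

Ltac rect_sqdist_eval :=
  unfold sqdist, rect_point; simpl; usq_cases; try lra; field; lra.

Lemma pval_midpoints_value a b c d r s : 0 < r -> 0 < s ->
  sqdist a b = (r / 2)^2 -> sqdist a d = (r / 2)^2 ->
  sqdist c d = r^2 / 4 + s^2 -> sqdist b c = r^2 / 4 + s^2 ->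
  sqdist a c = s^2 -> sqdist b d = r^2 ->
  pval a b c d = sqrt (1 + r^2 / (4 * s^2)).
Proof.
  intros Hr Hs Eab Ead Ecd Ebc Eac Ebd.
  unfold pval; rewrite !dist2_sqdist, Eab, Ead, Ecd, Ebc, Eac, Ebd, !sqrt_pow2 by lra.
  replace (1 + r^2 / (4 * s^2)) with ((r^2 / 4 + s^2) / s^2) by (field; lra).
  rewrite sqrt_div_alt, sqrt_pow2 by nra.
  assert (0 < sqrt (r^2 / 4 + s^2)) by (apply sqrt_lt_R0; nra).
  field; lra.
Qed.

Lemma Pset_midpoints_r v0 th r s : 0 < r -> 0 < s ->
  Pset v0 th r s (sqrt (1 + r^2 / (4 * s^2))).
Proof.
  intros Hr Hs.
  rewrite <- (pval_midpoints_value (rect_point r s (1/2)) (rect_point r s 1)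
                (rect_point r s (5/2)) (rect_point r s 0) r s)
    by (try assumption; rect_sqdist_eval).
  apply Pset_rect_points; auto; lra.
Qed.

Lemma Pset_midpoints_s v0 th r s : 0 < r -> 0 < s ->
  Pset v0 th r s (sqrt (1 + s^2 / (4 * r^2))).
Proof.
  intros Hr Hs.
  rewrite <- (pval_midpoints_value (rect_point r s (3/2)) (rect_point r s 2)
                (rect_point r s (7/2)) (rect_point r s 1) s r)
    by (try assumption; rect_sqdist_eval).
  apply Pset_rect_points; auto; lra.
Qed.

Lemma le_sqrt_of_sq u v : 0 <= u -> u^2 <= v -> u <= sqrt v.
Proof. intros Hu H; rewrite <- (sqrt_pow2 u) by assumption; apply sqrt_le_1; nra. Qed.

Lemma div_in_unit_interval x y : 0 < x -> x < y -> 0 < x / y < 1.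
Proof.
  intros Hx Hxy; split; [apply Rdiv_lt_0_compat; lra|].
  apply (Rmult_lt_reg_r y); [lra|]; unfold Rdiv; rewrite Rmult_assoc, Rinv_l; lra.
Qed.

Lemma pval_near_corner_ge r s e : 0 < r -> 0 < s -> 0 < e -> e < r -> e < s ->
  sqrt 2 * (1 - e / sqrt (r^2 + s^2)) <=
  pval (rect_point r s (4 - e / s)) (rect_point r s 0) (rect_point r s (e / r))
       (rect_point r s 2).
Proof.
  intros Hr Hs He Her Hes.
  pose proof (div_in_unit_interval e r He Her); pose proof (div_in_unit_interval e s He Hes).
  set (D := sqrt (r^2 + s^2)).
  assert (HD2 : D^2 = r^2 + s^2) by (apply pow2_sqrt; nra).
  assert (HD : 0 < D) by (apply sqrt_lt_R0; nra).
  unfold pval; rewrite !dist2_sqdist.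
  replace (sqdist (rect_point r s (4 - e / s)) (rect_point r s 0)) with (e^2)
    by (symmetry; rect_sqdist_eval).
  replace (sqdist (rect_point r s (e / r)) (rect_point r s 2)) with ((e - r)^2 + s^2)
    by (symmetry; rect_sqdist_eval).
  replace (sqdist (rect_point r s (4 - e / s)) (rect_point r s 2)) with (r^2 + (e - s)^2)
    by (symmetry; rect_sqdist_eval).
  replace (sqdist (rect_point r s 0) (rect_point r s (e / r))) with (e^2)
    by (symmetry; rect_sqdist_eval).
  replace (sqdist (rect_point r s (4 - e / s)) (rect_point r s (e / r))) with (2 * e^2)
    by (symmetry; rect_sqdist_eval).
  replace (sqdist (rect_point r s 0) (rect_point r s 2)) with (r^2 + s^2)
    by (symmetry; rect_sqdist_eval).
  fold D; rewrite sqrt_mult, !sqrt_pow2 by nra.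
  (* both points near the corner are at distance at least D - e from the opposite corner *)
  assert (Hu : D - e <= sqrt ((e - r)^2 + s^2)).
  { destruct (Rle_dec (D - e) 0); [pose proof (sqrt_pos ((e - r)^2 + s^2)); lra|].
    apply le_sqrt_of_sq; nra. }
  assert (Hv : D - e <= sqrt (r^2 + (e - s)^2)).
  { destruct (Rle_dec (D - e) 0); [pose proof (sqrt_pos (r^2 + (e - s)^2)); lra|].
    apply le_sqrt_of_sq; nra. }
  assert (S2 : sqrt 2 * sqrt 2 = 2) by (apply sqrt_sqrt; lra).
  assert (S20 : 0 < sqrt 2) by (apply sqrt_lt_R0; lra).
  set (u := sqrt ((e - r)^2 + s^2)) in *; set (v := sqrt (r^2 + (e - s)^2)) in *.
  replace ((e * u + v * e) / (sqrt 2 * e * D)) with ((u + v) / (sqrt 2 * D)) by (field; lra).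
  apply (Rmult_le_reg_r (sqrt 2 * D)); [nra|].
  replace ((u + v) / (sqrt 2 * D) * (sqrt 2 * D)) with (u + v) by (field; lra).
  replace (sqrt 2 * (1 - e / D) * (sqrt 2 * D)) with (sqrt 2 * sqrt 2 * (D - e))
    by (field; lra).
  rewrite S2; lra.
Qed.

Lemma le_of_forall_small a D U e0 : 0 < a -> 0 < D -> 0 < e0 ->
  (forall e, 0 < e < e0 -> a * (1 - e / D) <= U) -> a <= U.
Proof.
  intros Ha HD He0 H.
  destruct (Rle_dec a U) as [|HU]; [assumption|exfalso]; apply Rnot_le_lt in HU.
  set (e := Rmin (e0 / 2) (D * (a - U) / (2 * a))).
  assert (He1 : e <= D * (a - U) / (2 * a)) by apply Rmin_r.
  assert (He2 : e <= e0 / 2) by apply Rmin_l.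
  assert (He : 0 < e < e0).
  { split; [|lra].
    apply Rmin_glb_lt; [lra | apply Rdiv_lt_0_compat; apply Rmult_lt_0_compat; lra]. }
  specialize (H e He).
  assert (a * (e / D) <= (a - U) / 2).
  { apply (Rmult_le_reg_r (2 * D / a)); [apply Rdiv_lt_0_compat; lra|].
    replace (a * (e / D) * (2 * D / a)) with (2 * e) by (field; lra).
    replace ((a - U) / 2 * (2 * D / a)) with (2 * (D * (a - U) / (2 * a))) by (field; lra).
    lra. }
  nra.
Qed.

Lemma sqrt2_le_upper_bound v0 th r s U : 0 < r -> 0 < s ->
  is_upper_bound (Pset v0 th r s) U -> sqrt 2 <= U.
Proof.
  intros Hr Hs HU.
  apply (le_of_forall_small _ (sqrt (r^2 + s^2)) _ (Rmin r s));
    [apply sqrt_lt_R0; lra | apply sqrt_lt_R0; nra | apply Rmin_glb_lt; assumption |].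
  intros e [He Hem].
  assert (Her : e < r) by (pose proof (Rmin_l r s); lra).
  assert (Hes : e < s) by (pose proof (Rmin_r r s); lra).
  eapply Rle_trans; [apply pval_near_corner_ge; assumption|].
  pose proof (div_in_unit_interval e r He Her); pose proof (div_in_unit_interval e s He Hes).
  apply HU, Pset_rect_points; try assumption; lra.
Qed.

Lemma Pset_half_ratio v0 th r s : 0 < r -> 0 < s ->
  Pset v0 th r s (sqrt (1 + (Rmax r s)^2 / (4 * (Rmin r s)^2))).
Proof.
  intros Hr Hs; unfold Rmax, Rmin.
  destruct (Rle_dec r s); [apply Pset_midpoints_s | apply Pset_midpoints_r]; assumption.
Qed.

Theorem mainTheorem20 (v0 : pt) (th r s : R) (hr : 0 < r) (hs : 0 < s) :
  exists P : R, is_lub (Pset v0 th r s) P /\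
    Rmax (sqrt 2) (sqrt (1 + (Rmax r s)^2 / (4 * (Rmin r s)^2))) <= P /\
    P <= sqrt (1 + (Rmax r s)^2 / (Rmin r s)^2).
Proof.
  assert (Hub : is_upper_bound (Pset v0 th r s) (sqrt (1 + (Rmax r s)^2 / (Rmin r s)^2)))
    by (intros x; apply Pset_le; assumption).
  destruct (completeness (Pset v0 th r s)) as [P HP].
  - eexists; exact Hub.
  - eexists; apply Pset_half_ratio; assumption.
  - exists P; split; [exact HP|]; destruct HP as [HPub HPleast]; split.
    + apply Rmax_lub.
      * apply (sqrt2_le_upper_bound v0 th r s); assumption.
      * apply HPub, Pset_half_ratio; assumption.
    + apply HPleast, Hub.
Qed.
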